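(* Let $G=\mathrm{Sp}(2r)$ with $r\geqslant1$, let $\lambda\in\Lambda^+$, $\lambda\neq0$, let $q=\max\{i\leqslant r:\alpha_i\in\operatorname{Supp}(\lambda)\}$ and set $\lambda^{\mathrm{lb}}_G=\lambda-\sum_{i=q}^{r-1}\alpha_i-\tfrac12\alpha_r=\lambda+\omega_{q-1}-\omega_q$ (with $\omega_0=0$). Then $\mathrm{LB}_G(\lambda)=\{\lambda^{\mathrm{lb}}_G\}$, i.e. $\lambda^{\mathrm{lb}}_G$ is the unique little brother of $\lambda$ with respect to $G$.
   Context: $G=\mathrm{Sp}(2r)$ over an algebraically closed field of characteristic zero (simply connected, so $\mathcal{X}(T)=\Lambda$ is the weight lattice), $T\subset B$ a maximal torus and Borel subgroup, $\Phi^+$ the positive roots, simple roots $\alpha_1,\dots,\alpha_r$ numbered as in Bourbaki (type $\mathsf{C}_r$, $\alpha_r$ long; $\mathsf{C}_2=\mathsf{B}_2$, $\mathsf{C}_1=\mathsf{A}_1$), $\omega_i$ the fundamental weights, $\Lambda^+$ the dominant weights. $\Pi^+(\lambda)=\{\mu\in\Lambda^+:\lambda-\mu\in\mathbb{N}[\Delta]\}$, $\Pi_G^+(\lambda)=\{\mu\in\Lambda^+:\lambda-\mu\in\mathbb{Q}_{\geq0}[\Delta]\}$; $\operatorname{Supp}(\lambda)=\{\alpha\in\Delta:\langle\lambda,\alpha^\vee\rangle\neq0\}$; $\Phi^+(\lambda)$ is the set of positive roots whose expression in simple roots involves some element of $\operatorname{Supp}(\lambda)$; $\nu\leqslant^\lambda_\mathbb{Q}\mu$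 iff $\mu-\nu\in\mathbb{Q}_{\geq0}[\Phi^+(\lambda)]$. Adjoint little brother: if $r\geqslant2$, $\alpha_{r-1}\notin\operatorname{Supp}(\lambda)$... more precisely, for the non-simply-laced diagram numbered from the extremal long root $\alpha_r$ (so that the first short root is $\alpha_{r-1}$), if $\alpha_{r-1}\notin\operatorname{Supp}(\lambda)$ and $\alpha_r\in\operatorname{Supp}(\lambda)$ then $\mathrm{LB}(\lambda)=\{\lambda-\alpha_{r-1}-\alpha_r\}$, and otherwise $\mathrm{LB}(\lambda)=\varnothing$ (also for $r=1$). $\mathrm{LB}_G(\lambda)$ is the set of elements of $(\Pi_G^+(\lambda)\smallsetminus\Pi^+(\lambda))\cup\mathrm{LB}(\lambda)$ maximal in this set w.r.t. $\leqslant^\lambda_\mathbb{Q}$. *)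

(* Type C_r root datum for G = Sp(2r), in epsilon-coordinates:
   weights are row vectors 'rV[rat]_r; the weight lattice Lambda = Z^r
   (G simply connected), simple roots (Bourbaki, 1-based indices)
   alpha_i = eps_i - eps_{i+1} (1 <= i < r), alpha_r = 2 eps_r. *)
From HB Require Import structures.
From mathcomp Require Import all_boot all_order all_algebra.
Set Implicit Arguments. Unset Strict Implicit. Unset Printing Implicit Defensive.
Import Order.TTheory GRing.Theory Num.Theory.
Local Open Scope ring_scope.

Section Cr.
Variable r : nat.

Definition vec := 'rV[rat]_r.

Definition eps (i : 'I_r) : vec := \row_j (j == i)%:R.

(* simple root alpha_i, 1-based index i, 1 <= i <= r (zero otherwise) *)
Definition alpha (i : nat) : vec :=
  \row_(j < r) (if (i < r)%N then ((j.+1 == i)%:R - (j.+1 == i.+1)%:R)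
               else if i == r then 2 * (j.+1 == r)%:R else 0).

Definition omega (i : nat) : vec := \row_(j < r) (j.+1 <= i)%N%:R.

Definition dot (u v : vec) : rat := \sum_(j < r) u 0 j * v 0 j.

Definition pairing (l : vec) (i : nat) : rat :=
  2 * dot l (alpha i) / dot (alpha i) (alpha i).

Definition in_lattice (l : vec) : Prop := forall j, l 0 j \is a Num.int.

Definition Supp (l : vec) (i : nat) : Prop :=
  (1 <= i <= r)%N /\ pairing l i != 0.

Definition dominant (l : vec) : Prop :=
  in_lattice l /\ forall i, (1 <= i <= r)%N -> 0 <= pairing l i.

Definition in_N_Delta (v : vec) : Prop :=
  exists c : nat -> nat, v = \sum_(1 <= i < r.+1) (c i)%:R *: alpha i.
Definition in_Q_Delta (v : vec) : Prop :=
  exists c : nat -> rat, (forall i, 0 <= c i) /\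
    v = \sum_(1 <= i < r.+1) c i *: alpha i.

Definition Pi_plus (l m : vec) : Prop := dominant m /\ in_N_Delta (l - m).
Definition Pi_plus_G (l m : vec) : Prop := dominant m /\ in_Q_Delta (l - m).

Definition sgn (b : bool) : rat := (-1) ^+ b.
Definition is_root (b : vec) : Prop :=
  exists (i j : 'I_r) (s t : bool),
    (i != j /\ b = sgn s *: eps i + sgn t *: eps j) \/ b = sgn s *: (2 *: eps i).
Definition is_pos_root (b : vec) : Prop := is_root b /\ in_N_Delta b.

Definition Phi_plus_l (l b : vec) : Prop :=
  is_pos_root b /\
  exists c : nat -> nat, b = \sum_(1 <= i < r.+1) (c i)%:R *: alpha i /\
    exists k, Supp l k /\ c k <> 0%N.

Definition leQ (l nu mu : vec) : Prop :=
  exists s : seq (rat * vec),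
    (forall p, p \in s -> 0 <= p.1 /\ Phi_plus_l l p.2) /\
    mu - nu = \sum_(p <- s) p.1 *: p.2.

(* adjoint little brother LB(lambda) (1-based: alpha_{r-1} short, alpha_r long) *)
Definition LB (l m : vec) : Prop :=
  (2 <= r)%N /\ ~ Supp l r.-1 /\ Supp l r /\ m = l - alpha r.-1 - alpha r.

Definition LB_candidate (l m : vec) : Prop :=
  (Pi_plus_G l m /\ ~ Pi_plus l m) \/ LB l m.

Definition LB_G (l m : vec) : Prop :=
  LB_candidate l m /\
  forall nu, LB_candidate l nu -> leQ l m nu -> nu = m.

End Cr.

From HB Require Import structures.
From mathcomp Require Import all_boot all_order all_algebra.
From mathcomp Require Import zify ring lra.
Import Order.TTheory GRing.Theory Num.Theory.
Local Open Scope ring_scope.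
Set Implicit Arguments. Unset Strict Implicit. Unset Printing Implicit Defensive.

(* In epsilon-coordinates lambda^lb_G = lambda - eps_q.  Partial sums of coordinates
   read off the alpha-coefficients of a weight, so eps_q lies in Q_{>=0}[Delta]
   but not in N[Delta] (its alpha_r-coefficient is 1/2), and lambda - eps_q is a
   candidate.  Conversely, for every other candidate mu, (lambda - eps_q) - mu lies
   in the cone Q_{>=0}[Phi^+(lambda)].  For mu in Pi^+_G \ Pi^+, d = lambda - mu is
   integral with nonnegative partial sums, total sum >= 1, nonpositive entries after
   position q, and nondecreasing on every interval without a support index of
   lambda; transporting positive mass of d - eps_q forward along roots
   eps_i - eps_j that cross a support index leaves a nonnegative vector supported
   on the first q coordinates, a combination of the roots 2 eps_j (j <= q).  For
   the adjoint little brother the difference is eps_{r-1}.  As the cone is pointed,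
   lambda - eps_q is the unique maximal candidate. *)

Lemma intr_ge1 (x : rat) : x \is a Num.int -> 0 < x -> 1 <= x.
Proof. by move=> xZ x_gt0; rewrite -(gtr0_norm x_gt0) norm_intr_ge1 ?gt_eqF. Qed.

Lemma sum_nat_indicator (F : nat -> rat) m n k :
  \sum_(m <= i < n) F i * (i == k)%:R = if (m <= k < n)%N then F k else 0.
Proof.
under eq_bigr do rewrite mulr_natr mulrb.
by rewrite -big_mkcond big_nat1_eq.
Qed.

Section Coordinates.
Variable r : nat.
Implicit Types (x y : vec r) (k n : nat).

(* Coordinates are 0-based (entry x n is the coefficient of eps_{n+1}), while
   simple roots keep the 1-based numbering of [alpha]. *)
Definition entry x n : rat := \sum_(j < r | j == n :> nat) x 0 j.

(* [psum k] is the fundamental coweight of index k for k < r, and twice the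
   one of index r for k = r: it reads off alpha_k-coefficients. *)
Definition psum k x : rat := \sum_(j < r | (j < k)%N) x 0 j.

Definition eps_at n : vec r := \row_(j < r) (j == n :> nat)%:R.

Lemma sum_ord_indicator (P : pred nat) n :
  \sum_(j < r | P j) (j == n :> nat)%:R = ((n < r)%N && P n)%:R :> rat.
Proof.
under eq_bigr do rewrite -[_%:R]mulr1n mulrb.
by rewrite -big_mkcondr (big_ord1_cond_eq _ (fun=> 1)); case: andP.
Qed.

Lemma entryE x (j : 'I_r) : entry x j = x 0 j.
Proof. by rewrite /entry (big_pred1 j). Qed.

Lemma entry_row (f : nat -> rat) n :
  entry (\row_(j < r) f j) n = if (n < r)%N then f n else 0.
Proof. by rewrite /entry; under eq_bigr do rewrite mxE; rewrite big_ord1_eq. Qed.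

Lemma entry_out x n : (r <= n)%N -> entry x n = 0.
Proof.
by move=> le_rn; rewrite /entry big_pred0 // => j; apply: contra_leqF le_rn => /eqP <-.
Qed.

Lemma entryB x y n : entry (x - y) n = entry x n - entry y n.
Proof. by rewrite /entry -sumrB; apply: eq_bigr => j _; rewrite !mxE. Qed.

Lemma entryZ a x n : entry (a *: x) n = a * entry x n.
Proof. by rewrite /entry mulr_sumr; apply: eq_bigr => j _; rewrite mxE. Qed.

Lemma entry_eps_at n k : entry (eps_at n) k = ((k < r)%N && (k == n))%:R.
Proof. by rewrite /eps_at (entry_row (fun m => (m == n)%:R)); case: ltnP. Qed.

Lemma sum_entry_indicator x n : \sum_(j < r) x 0 j * (j == n :> nat)%:R = entry x n.
Proof. by rewrite /entry [RHS]big_mkcond; apply: eq_bigr => j _; rewrite mulr_natr mulrb. Qed.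

Lemma psum_nil x : psum 0 x = 0.
Proof. exact: big_pred0. Qed.

Lemma psum0 k : psum k (0 : vec r) = 0.
Proof. by rewrite /psum big1 // => j _; rewrite mxE. Qed.

Lemma psumS x (j : 'I_r) : psum j.+1 x = psum j x + x 0 j.
Proof.
rewrite /psum (bigD1 j) //= addrC; congr (_ + _); apply: eq_bigl => i.
by rewrite ltnS ltn_neqAle andbC.
Qed.

Lemma psumD k x y : psum k (x + y) = psum k x + psum k y.
Proof. by rewrite /psum -big_split; apply: eq_bigr => j _; rewrite mxE. Qed.

Lemma psumB k x y : psum k (x - y) = psum k x - psum k y.
Proof. by rewrite /psum -sumrB; apply: eq_bigr => j _; rewrite !mxE. Qed.

Lemma psumN k x : psum k (- x) = - psum k x.
Proof. by rewrite /psum -sumrN; apply: eq_bigr => j _; rewrite mxE. Qed.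

Lemma psumZ k a x : psum k (a *: x) = a * psum k x.
Proof. by rewrite /psum mulr_sumr; apply: eq_bigr => j _; rewrite mxE. Qed.

Lemma psum_sum k I (s : seq I) (P : pred I) (F : I -> vec r) :
  psum k (\sum_(i <- s | P i) F i) = \sum_(i <- s | P i) psum k (F i).
Proof. exact: (big_morph _ (psumD k) (psum0 k)). Qed.

Lemma psum_eps_at n k : psum k (eps_at n) = ((n < r) && (n < k))%N%:R.
Proof.
rewrite /psum; under eq_bigr do rewrite mxE.
by rewrite (sum_ord_indicator (fun j => j < k)%N).
Qed.

Lemma eps_eps_at (i : 'I_r) : eps i = eps_at i.
Proof. by apply/rowP => j; rewrite !mxE. Qed.

Lemma psum_eps (i : 'I_r) k : psum k (eps i) = (i < k)%N%:R.
Proof. by rewrite eps_eps_at psum_eps_at ltn_ord. Qed.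

Lemma eq_from_psum x y : (forall k, (k <= r)%N -> psum k x = psum k y) -> x = y.
Proof.
move=> eq_xy; apply/rowP => j.
have := eq_xy j.+1 (ltn_ord j).
by rewrite !psumS (eq_xy j (ltnW (ltn_ord j))); apply: addrI.
Qed.

End Coordinates.

Section SimpleRoots.
Variable r : nat.
Implicit Types (x y : vec r) (i k m n : nat).
Local Notation alpha := (alpha r).

Lemma alpha_lt i : (0 < i < r)%N -> alpha i = eps_at r i.-1 - eps_at r i.
Proof. by case: i => // i /andP[_ lt_ir]; apply/rowP => j; rewrite !mxE lt_ir !eqSS. Qed.

Lemma alpha_r : (0 < r)%N -> alpha r = 2 *: eps_at r r.-1.
Proof.
move=> r_gt0; apply/rowP => j.
by rewrite !mxE ltnn eqxx -(eqSS j) prednK.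
Qed.

Lemma dot_alpha x i : (0 < i < r)%N -> dot x (alpha i) = entry x i.-1 - entry x i.
Proof.
move=> i_lt; rewrite /dot alpha_lt // -!sum_entry_indicator -sumrB.
by apply: eq_bigr => j _; rewrite !mxE mulrBr.
Qed.

Lemma dot_alpha_r x : (0 < r)%N -> dot x (alpha r) = 2 * entry x r.-1.
Proof.
move=> r_gt0; rewrite /dot alpha_r // -sum_entry_indicator mulr_sumr.
by apply: eq_bigr => j _; rewrite !mxE mulrCA.
Qed.

Lemma pairingE x i : (0 < i <= r)%N -> pairing x i = entry x i.-1 - entry x i.
Proof.
case/andP=> i_gt0; rewrite leq_eqVlt => /orP[/eqP eq_ir | lt_ir].
  move: i_gt0; rewrite eq_ir => r_gt0.
  rewrite /pairing !dot_alpha_r // alpha_r // entryZ entry_eps_at (entry_out x (leqnn r)).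
  by rewrite eqxx prednK // leqnn /=; field.
have i1_lt : (i.-1 < r)%N by lia.
have i_lt : (0 < i < r)%N by rewrite i_gt0.
rewrite /pairing !dot_alpha // alpha_lt // !entryB !entry_eps_at.
have pred_neq : (i.-1 == i) = false by lia.
rewrite lt_ir i1_lt !eqxx pred_neq eq_sym pred_neq /=.
by field.
Qed.

Lemma psum_alpha_lt i k : (0 < i < r)%N -> psum k (alpha i) = (i == k)%:R.
Proof.
move=> i_range; rewrite alpha_lt // psumB !psum_eps_at -natrB; last by lia.
by apply/eqP; rewrite eqr_nat; apply/eqP; lia.
Qed.

Lemma psum_alpha_r k : (0 < r)%N -> (k <= r)%N -> psum k (alpha r) = 2 * (k == r)%:R.
Proof.
by move=> r_gt0 le_kr; rewrite alpha_r // psumZ psum_eps_at; congr (2 * _%:R); lia.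
Qed.

Lemma psum_alpha_comb (c : nat -> rat) k : (0 < k <= r)%N ->
  psum k (\sum_(1 <= i < r.+1) c i *: alpha i) = if (k < r)%N then c k else 2 * c r.
Proof.
move=> k_range; have r_gt0 : (0 < r)%N by lia.
rewrite psum_sum big_nat_recr //= psumZ psum_alpha_r //; last by lia.
rewrite (eq_big_nat _ _ (F2 := fun i => c i * (i == k)%:R)); last first.
  by move=> i i_range; rewrite psumZ psum_alpha_lt.
have k_gt0 : (0 < k)%N by lia.
rewrite sum_nat_indicator k_gt0; have [lt_kr | le_rk] := ltnP k r.
  by rewrite (_ : k == r = false) ?mulr0 ?addr0 //; lia.
by rewrite (_ : k == r) ?mulr1 ?add0r 1?mulrC //; lia.
Qed.

Lemma pairingB x y i : (0 < i <= r)%N -> pairing (x - y) i = pairing x i - pairing y i.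
Proof. by move=> i_range; rewrite !pairingE // !entryB; ring. Qed.

Definition alpha_coef x i : rat := if (i < r)%N then psum i x else psum r x / 2.

Lemma alpha_expansion x : x = \sum_(1 <= i < r.+1) alpha_coef x i *: alpha i.
Proof.
apply: eq_from_psum => -[|k] le_kr; first by rewrite !psum_nil.
rewrite psum_alpha_comb // /alpha_coef; case: ltnP => // le_rk.
rewrite ltnn (_ : k.+1 = r); last by lia.
by rewrite mulrC divfK.
Qed.

Lemma in_Q_DeltaP x : in_Q_Delta x <-> (forall k, (k <= r)%N -> 0 <= psum k x).
Proof.
split=> [[c [c_ge0 ->]] [|k] le_kr | psum_ge0]; first by rewrite psum_nil.
  by rewrite psum_alpha_comb //; case: ifP => _; rewrite ?mulr_ge0.
exists (alpha_coef x); split; last exact: alpha_expansion.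
move=> i; rewrite /alpha_coef; case: ltnP => [lt_ir | _].
  exact/psum_ge0/ltnW.
by rewrite divr_ge0 ?psum_ge0.
Qed.

Lemma N_Delta_Q_Delta x : in_N_Delta x -> in_Q_Delta x.
Proof. by case=> c ->; exists (fun i => (c i)%:R); split=> // i; exact: ler0n. Qed.

Lemma psum_N_Delta x : (0 < r)%N -> in_N_Delta x -> exists n : nat, psum r x = n.*2%:R.
Proof.
move=> r_gt0 [c ->]; exists (c r).
rewrite psum_alpha_comb ?r_gt0 ?leqnn // ltnn.
by rewrite -muln2 natrM mulrC.
Qed.

Lemma N_Delta_psum x : (forall k, (k < r)%N -> psum k x \is a Num.nat) ->
  psum r x / 2 \is a Num.nat -> in_N_Delta x.
Proof.
move=> psum_nat half_nat; exists (fun i => Num.truncn (alpha_coef x i)).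
rewrite {1}(alpha_expansion x); apply: eq_big_nat => i _.
by rewrite truncnK // /alpha_coef; case: ltnP => // /psum_nat.
Qed.

End SimpleRoots.

Section PhiCone.
Variables (r : nat) (l : vec r).
Implicit Types (x y b : vec r).

Definition Phi_cone x : Prop :=
  exists s : seq (rat * vec r),
    (forall p, p \in s -> 0 <= p.1 /\ Phi_plus_l l p.2) /\ x = \sum_(p <- s) p.1 *: p.2.

Lemma leQE nu mu : leQ l nu mu <-> Phi_cone (mu - nu).
Proof. by []. Qed.

Lemma Phi_cone0 : Phi_cone 0.
Proof. by exists [::]; rewrite big_nil. Qed.

Lemma Phi_coneD x y : Phi_cone x -> Phi_cone y -> Phi_cone (x + y).
Proof.
move=> [s [s_pos ->]] [s' [s'_pos ->]]; exists (s ++ s'); rewrite big_cat.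
by split=> // p; rewrite mem_cat => /orP[/s_pos | /s'_pos].
Qed.

Lemma Phi_cone_root a b : 0 <= a -> Phi_plus_l l b -> Phi_cone (a *: b).
Proof.
by move=> a_ge0 Phi_b; exists [:: (a, b)]; rewrite big_seq1; split=> // p /[!inE] /eqP->.
Qed.

Lemma Phi_cone_sum I (s : seq I) (P : pred I) (F : I -> vec r) :
  (forall i, P i -> Phi_cone (F i)) -> Phi_cone (\sum_(i <- s | P i) F i).
Proof. by move=> F_cone; apply: big_ind => //; [exact: Phi_cone0 | exact: Phi_coneD]. Qed.

Lemma Phi_cone_psum_ge0 x k : Phi_cone x -> (k <= r)%N -> 0 <= psum k x.
Proof.
move=> [s [s_pos ->]] le_kr; rewrite psum_sum big_seq.
apply: sumr_ge0 => p /s_pos[p1_ge0 [[_ p2_N] _]].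
by rewrite psumZ mulr_ge0 //; move/N_Delta_Q_Delta/in_Q_DeltaP: p2_N; apply.
Qed.

Lemma Phi_cone_pointed x : Phi_cone x -> Phi_cone (- x) -> x = 0.
Proof.
move=> x_cone Nx_cone; apply: eq_from_psum => k le_kr; apply/eqP.
by rewrite psum0 eq_le -oppr_ge0 -psumN !Phi_cone_psum_ge0.
Qed.

Lemma Phi_plus_lI b (c : nat -> nat) k : is_root b ->
  b = \sum_(1 <= i < r.+1) (c i)%:R *: alpha r i -> Supp l k -> c k <> 0%N -> Phi_plus_l l b.
Proof.
move=> root_b b_eq supp_k ck_neq0.
by split; [split=> //; exists c | exists c; split=> //; exists k].
Qed.

Lemma Phi_plus_eps_sub (i j : 'I_r) k :
  (i < k <= j)%N -> Supp l k -> Phi_plus_l l (eps i - eps j).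
Proof.
move=> k_range supp_k.
apply: (@Phi_plus_lI _ (fun m => (i < m <= j)%N) k) => //; last by rewrite k_range.
  exists i, j, false, true; left; split.
    by apply/eqP => eq_ij; move: k_range; rewrite eq_ij; lia.
  by rewrite /sgn expr0 expr1 scale1r scaleN1r.
apply: eq_from_psum => -[|m] le_mr; first by rewrite !psum_nil.
rewrite (psum_alpha_comb (fun m => (i < m <= j)%N%:R)) // psumB !psum_eps -natrB; last by lia.
case: ifP => lt_mr; first by apply/eqP; rewrite eqr_nat; apply/eqP; lia.
by have lt_jr := ltn_ord j; rewrite -natrM; apply/eqP; rewrite eqr_nat; apply/eqP; lia.
Qed.

Lemma Phi_plus_two_eps (j : 'I_r) q : (j < q)%N -> Supp l q -> Phi_plus_l l (2 *: eps j).
Proof.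
move=> lt_jq supp_q; have le_qr : (q <= r)%N by case: supp_q => /andP[].
pose c m := if (m < r)%N then (j < m).*2 else 1%N.
apply: (@Phi_plus_lI _ c q) => //; last by rewrite /c; case: ifP; lia.
  by exists j, j, false, false; right; rewrite /sgn expr0 scale1r.
apply: eq_from_psum => -[|m] le_mr; first by rewrite !psum_nil.
rewrite (psum_alpha_comb (fun m => (c m)%:R)) // psumZ psum_eps /c.
case: ifP => lt_mr; first by rewrite lt_mr -muln2 natrM mulrC.
by rewrite ltnn (_ : (j < m.+1)%N) //; lia.
Qed.

End PhiCone.

Section Transfer.
Variable r : nat.
Implicit Types (x : vec r) (i j m : 'I_r).

Lemma psum_gt0_entry x k : 0 < psum k x -> exists2 i : 'I_r, (i < k)%N & 0 < x 0 i.
Proof.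
move=> psum_gt0; have [/existsP[i /andP[lt_ik x_i_gt0]] | /existsPn no_pos] :=
  boolP [exists i : 'I_r, (i < k)%N && (0 < x 0 i)]; first by exists i.
suff : psum k x <= 0 by rewrite leNgt psum_gt0.
by apply: sumr_le0 => i lt_ik; move: (no_pos i); rewrite lt_ik -leNgt.
Qed.

Lemma entry_le_psum x i k :
  (i < k)%N -> (forall m, (m < k)%N -> 0 <= x 0 m) -> x 0 i <= psum k x.
Proof.
move=> lt_ik x_ge0; rewrite /psum (bigD1 i) //= lerDl.
by apply: sumr_ge0 => m /andP[/x_ge0].
Qed.

Definition transfer x i j t : vec r := x - t *: (eps i - eps j).

Lemma transfer_entry x i j t m : i != j ->
  transfer x i j t 0 m = if m == i then x 0 i - t else if m == j then x 0 j + t else x 0 m.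
Proof.
move=> neq_ij; rewrite !mxE; have [->|neq_mi] := eqVneq m i.
  by rewrite (negbTE neq_ij) subr0 mulr1.
by have [->|neq_mj] := eqVneq m j; rewrite /= ?subr0 ?mulr0 ?subr0 ?sub0r ?mulrN1 ?opprK.
Qed.

Lemma transfer_sign x i j t m : i != j -> t <= x 0 i -> 0 <= t <= - x 0 j ->
  (0 < transfer x i j t 0 m -> 0 < x 0 m) /\ (transfer x i j t 0 m < 0 -> x 0 m < 0).
Proof.
move=> neq_ij t_le_xi /andP[t_ge0 t_le_Nxj]; rewrite transfer_entry //.
by have [->|_] := eqVneq m i; [|have [->|_] := eqVneq m j]; split=> //; lra.
Qed.

Lemma transfer_support x i j : i != j -> 0 < x 0 i -> x 0 j < 0 ->
  (#|[pred m | (transfer x i j (Num.min (x 0 i) (- x 0 j)) 0 m != 0)%R]|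
    < #|[pred m | (x 0 m != 0)%R]|)%N.
Proof.
move=> neq_ij x_i_gt0 x_j_lt0; apply/proper_card/properP; split.
  apply/subsetP => m; rewrite !inE transfer_entry //.
  by have [->|_] := eqVneq m i; [|have [->|_] := eqVneq m j] => //; rewrite !neq_lt; lra.
have [_ | _] := leP (x 0 i) (- x 0 j).
  exists i; rewrite !inE; first exact: lt0r_neq0.
  by rewrite transfer_entry // eqxx subrr eqxx.
exists j; rewrite !inE; first exact: ltr0_neq0.
by rewrite transfer_entry // [j == i]eq_sym (negbTE neq_ij) eqxx addrN eqxx.
Qed.

Lemma transfer_psum_ge0 x i j t k : (i < j)%N -> 0 <= t <= x 0 i ->
    (forall m : 'I_r, (m < j)%N -> 0 <= x 0 m) -> 0 <= psum k x ->
  0 <= psum k (transfer x i j t).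
Proof.
move=> lt_ij /andP[t_ge0 t_le_xi] x_ge0 psum_ge0.
rewrite psumB psumZ psumB !psum_eps.
have [lt_ik | le_ki] := ltnP i k; last first.
  by rewrite (_ : (j < k)%N = false) ?subrr ?mulr0 ?subr0 //; lia.
have [lt_jk | le_kj] := ltnP j k; first by rewrite subrr mulr0 subr0.
rewrite subr0 mulr1 subr_ge0 (le_trans t_le_xi) // entry_le_psum // => m lt_mk.
by apply: x_ge0; lia.
Qed.

End Transfer.

Section Transport.
Variables (r : nat) (l : vec r) (q : nat).
Hypothesis supp_q : Supp l q.

Lemma Phi_cone_nonneg (y : vec r) : (forall j, 0 <= y 0 j) ->
  (forall j : 'I_r, (q <= j)%N -> y 0 j = 0) -> Phi_cone l y.
Proof.
move=> y_ge0 y_tail.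
have -> : y = \sum_(j < r) (y 0 j / 2) *: (2 *: eps j).
  apply/rowP => k; rewrite summxE -entryE -sum_entry_indicator.
  by apply: eq_bigr => j _; rewrite !mxE mulrA divfK // eq_sym.
apply: Phi_cone_sum => j _; have [lt_jq | le_qj] := ltnP j q.
  by apply: Phi_cone_root; [rewrite divr_ge0 | exact: Phi_plus_two_eps lt_jq supp_q].
by rewrite y_tail // mul0r scale0r; exact: Phi_cone0.
Qed.

(* Greedy transport: move mass from a positive entry i into the first negative
   entry j along the root eps_i - eps_j; each move kills an entry. *)
Lemma Phi_cone_transport (x : vec r) :
    (forall k, (k <= r)%N -> 0 <= psum k x) ->
    (forall i j : 'I_r, (i < j)%N -> 0 < x 0 i -> x 0 j < 0 ->
       exists2 k, (i < k <= j)%N & Supp l k) ->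
    (forall j : 'I_r, (q <= j)%N -> x 0 j <= 0) ->
  Phi_cone l x.
Proof.
move: {2}#|_| (erefl #|[pred m | (x 0 m != 0)%R]|) => n.
elim/ltn_ind: n x => n IH x card_x psum_ge0 crossing tail_le0.
have [/existsP[j1 x_j1_lt0] | /existsPn x_ge0] := boolP [exists m, x 0 m < 0]; last first.
  apply: Phi_cone_nonneg => [m | m le_qm]; first by rewrite leNgt x_ge0.
  by apply/eqP; rewrite eq_le tail_le0 // leNgt x_ge0.
case: (@arg_minnP _ j1 (fun m => x 0 m < 0) (fun m : 'I_r => nat_of_ord m) x_j1_lt0)
  => j x_j_lt0 j_min.
have x_ge0_below : forall m : 'I_r, (m < j)%N -> 0 <= x 0 m.
  by move=> m lt_mj; rewrite leNgt; apply: contraTN lt_mj => /j_min; rewrite -leqNgt.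
have [i lt_ij x_i_gt0] : exists2 i : 'I_r, (i < j)%N & 0 < x 0 i.
  by apply: psum_gt0_entry; have := psum_ge0 j.+1 (ltn_ord j); rewrite psumS; lra.
have neq_ij : i != j by apply: contraTneq lt_ij => ->; rewrite ltnn.
have [k k_range supp_k] := crossing i j lt_ij x_i_gt0 x_j_lt0.
set t := Num.min (x 0 i) (- x 0 j).
have t_gt0 : 0 < t by rewrite lt_min x_i_gt0 oppr_gt0.
have /andP[t_le_xi t_le_Nxj] : (t <= x 0 i) && (t <= - x 0 j) by rewrite -le_min.
have t_range : 0 <= t <= - x 0 j by rewrite ltW.
have -> : x = transfer x i j t + t *: (eps i - eps j) by rewrite subrK.
apply: Phi_coneD; last exact: Phi_cone_root (ltW t_gt0) (Phi_plus_eps_sub k_range supp_k).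
apply: (IH _ _ _ erefl).
- by rewrite -card_x; exact: transfer_support.
- move=> k' le_k'r; apply: transfer_psum_ge0 => //; first by rewrite ltW.
  exact: psum_ge0.
- move=> a b lt_ab x'_a_gt0 x'_b_lt0; apply: crossing => //.
    exact: (transfer_sign _ neq_ij t_le_xi t_range).1.
  exact: (transfer_sign _ neq_ij t_le_xi t_range).2.
- move=> b le_qb; rewrite leNgt; apply: contraTN (tail_le0 b le_qb) => x'_b_gt0.
  by rewrite -ltNge; exact: (transfer_sign _ neq_ij t_le_xi t_range).1.
Qed.

End Transport.

Section Dominance.
Variable r : nat.
Implicit Types (x : vec r) (i k m n : nat).

Lemma SuppP x i : reflect (Supp x i) ((0 < i <= r)%N && (pairing x i != 0)).
Proof. exact: (iffP andP). Qed.

Lemma pairing_notSupp x i : (0 < i <= r)%N -> ~ Supp x i -> pairing x i = 0.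
Proof. by move=> i_range not_supp; apply/eqP/negPn/negP => ?; apply: not_supp. Qed.

Lemma entry_int x n : in_lattice x -> entry x n \is a Num.int.
Proof. by move=> x_int; apply: rpred_sum => j _. Qed.

Lemma psum_int x k : in_lattice x -> psum k x \is a Num.int.
Proof. by move=> x_int; apply: rpred_sum => j _. Qed.

Lemma Supp_pairing_ge1 x i : dominant x -> Supp x i -> 1 <= pairing x i.
Proof.
move=> [x_int x_dom] [i_range pairing_neq0]; apply: intr_ge1.
  by rewrite pairingE // rpredB ?entry_int.
by rewrite lt0r pairing_neq0 x_dom.
Qed.

Lemma dominant_entry_le x m n : dominant x -> (m <= n)%N -> entry x n <= entry x m.
Proof.
move=> [_ x_dom]; apply: Order.NatMonotonyTheory.nonincnP => k.
have [lt_kr | le_rk] := ltnP k r; last by rewrite !entry_out // ltnW.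
by have := x_dom k.+1; rewrite pairingE //= subr_ge0; apply.
Qed.

Lemma dominant_entry_ge0 x n : dominant x -> 0 <= entry x n.
Proof.
move=> x_dom; rewrite -(entry_out x (leq_addl n r)).
exact: dominant_entry_le (leq_addr r n).
Qed.

Lemma entry_eq_pairing0 x a b : (a <= b <= r)%N ->
  (forall k, (a < k <= b)%N -> pairing x k = 0) -> entry x a = entry x b.
Proof.
move=> /andP[le_ab le_br] pairing0; apply/eqP; rewrite eq_sym -subr_eq0.
rewrite -(@telescope_sumr_eq _ _ _ _ (fun k => - pairing x k.+1)) // => [|k k_range].
  apply/eqP; rewrite big_nat_cond big1 // => k /andP[k_range _].
  by rewrite pairing0 ?oppr0 //; lia.
by rewrite pairingE /= ?opprB //; lia.
Qed.

End Dominance.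

Section LittleBrother.
Variables (r : nat) (l : vec r) (q : nat).
Hypotheses (l_dom : dominant l) (supp_q : Supp l q).
Hypothesis q_max : forall i, (q < i <= r)%N -> ~ Supp l i.
Local Notation e := (eps_at r q.-1).

Let q_range : (0 < q <= r)%N. Proof. by case: supp_q. Qed.

Lemma entry_l_tail n : (q <= n)%N -> entry l n = 0.
Proof.
move=> le_qn; have [le_nr | lt_rn] := leqP n r; last by rewrite entry_out // ltnW.
rewrite (@entry_eq_pairing0 _ _ _ r) ?le_nr ?leqnn ?entry_out // => k k_range.
by apply: pairing_notSupp; [lia | apply: q_max; lia].
Qed.

Lemma psum_eps_q k : psum k e = (q <= k)%:R.
Proof. by rewrite psum_eps_at; congr _%:R; lia. Qed.

Lemma pairing_eps_q_le i : (0 < i <= r)%N -> pairing e i <= (i == q)%:R.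
Proof.
move=> i_range; rewrite pairingE // !entry_eps_at lerBlDr -natrD ler_nat; lia.
Qed.

Lemma dominant_llb : dominant (l - e).
Proof.
case: l_dom => l_int l_pairing; split=> [j | i i_range].
  by rewrite !mxE rpredB ?rpred_nat.
rewrite pairingB // subr_ge0 (le_trans (pairing_eps_q_le i_range)) //.
by have [->|_] := eqVneq i q; [exact: Supp_pairing_ge1 | exact: l_pairing].
Qed.

Lemma candidate_llb : LB_candidate l (l - e).
Proof.
have r_gt0 : (0 < r)%N by lia.
left; rewrite /Pi_plus_G /Pi_plus subKr; split.
  by split; [exact: dominant_llb | apply/in_Q_DeltaP => k _; rewrite psum_eps_q ler0n].
case=> _ /(psum_N_Delta r_gt0) [n]; rewrite psum_eps_q.
by move/eqP; rewrite eqr_nat; lia.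
Qed.

Section Candidate.
Variable m : vec r.
Hypotheses (m_dom : dominant m) (diff_Q : in_Q_Delta (l - m)).
Hypothesis diff_notN : ~ in_N_Delta (l - m).

Let diff_int : in_lattice (l - m).
Proof. by case: l_dom => l_int _; case: m_dom => m_int _ j; rewrite !mxE rpredB. Qed.

Lemma psum_diff_ge1 : 1 <= psum r (l - m).
Proof.
have psum_ge0 := (in_Q_DeltaP (l - m)).1 diff_Q.
apply: intr_ge1; first exact: psum_int.
rewrite lt0r psum_ge0 // andbT; apply/negP => /eqP psum_r0; apply: diff_notN.
apply: N_Delta_psum => [k lt_kr | ]; last by rewrite psum_r0 mul0r rpred0.
by rewrite natrEint psum_int ?psum_ge0 // ltnW.
Qed.

Lemma diff_tail_le0 (j : 'I_r) : (q <= j)%N -> (l - m) 0 j <= 0.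
Proof.
move=> le_qj; rewrite !mxE -!entryE entry_l_tail // sub0r oppr_le0.
exact: dominant_entry_ge0.
Qed.

Lemma psum_diff_tail k : (q <= k)%N -> psum r (l - m) <= psum k (l - m).
Proof.
move=> le_qk.
have -> : psum r (l - m) = psum k (l - m) + \sum_(j < r | (k <= j)%N) (l - m) 0 j.
  rewrite /psum (bigID (fun j : 'I_r => (j < k)%N)) /=.
  by congr (_ + _); apply: eq_bigl => j; rewrite ltn_ord // -leqNgt.
by rewrite gerDl sumr_le0 // => j le_kj; apply: diff_tail_le0; lia.
Qed.

Lemma diff_block_le (a b : 'I_r) : (a <= b)%N -> (forall k, (a < k <= b)%N -> ~ Supp l k) ->
  (l - m) 0 a <= (l - m) 0 b.
Proof.
move=> le_ab no_supp; rewrite !mxE -!entryE (@entry_eq_pairing0 _ l a b).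
- by rewrite lerD2l lerN2 dominant_entry_le.
- by rewrite le_ab ltnW.
- move=> k k_range; apply: pairing_notSupp (no_supp _ k_range).
  by have := ltn_ord b; lia.
Qed.

Lemma psum_shifted_ge0 k : (k <= r)%N -> 0 <= psum k (l - m - e).
Proof.
move=> le_kr; rewrite psumB psum_eps_q subr_ge0.
have [le_qk | _] := leqP q k; last exact: (in_Q_DeltaP (l - m)).1 diff_Q k le_kr.
exact: le_trans psum_diff_ge1 (psum_diff_tail le_qk).
Qed.

(* With no support index in (i, j], l is constant on [i, j] while m decreases;
   integrality excludes 0 < (l - m)_j < 1. *)
Lemma shifted_crossing (i j : 'I_r) :
    (i < j)%N -> 0 < (l - m - e) 0 i -> (l - m - e) 0 j < 0 ->
  exists2 k, (i < k <= j)%N & Supp l k.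
Proof.
move=> lt_ij x_i_gt0 x_j_lt0.
have [/hasP[k /[!mem_iota] k_range /SuppP supp_k] | /hasPn no_supp] :=
  boolP (has (fun k => (0 < k <= r)%N && (pairing l k != 0)) (iota i.+1 (j - i))).
  by exists k => //; lia.
have not_supp k : (i < k <= j)%N -> ~ Supp l k.
  move=> k_range /SuppP supp_k.
  suff : k \in iota i.+1 (j - i) by move/no_supp; rewrite supp_k.
  by rewrite mem_iota; lia.
have neq_iq : (i == q.-1 :> nat) = false.
  by apply/negP => /eqP eq_iq; apply: (not_supp q _ supp_q); lia.
have d_i_gt0 : 0 < (l - m) 0 i by move: x_i_gt0; rewrite [in X in _ -> X]mxE !mxE neq_iq subr0.
have d_j_le0 : (l - m) 0 j <= 0.
  rewrite leNgt; apply/negP => /(intr_ge1 (diff_int j)).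
  by move: x_j_lt0; rewrite !mxE; case: (_ == _ :> nat) => /=; lra.
by have := diff_block_le (ltnW lt_ij) not_supp; lra.
Qed.

Lemma shiftediff_tail_le0_le0 (j : 'I_r) : (q <= j)%N -> (l - m - e) 0 j <= 0.
Proof.
move=> le_qj; have := diff_tail_le0 le_qj.
by rewrite !mxE (_ : (j == q.-1 :> nat) = false) ?subr0 //; lia.
Qed.

Lemma Pi_plus_G_Phi_cone : Phi_cone l (l - e - m).
Proof.
rewrite addrAC; apply: (Phi_cone_transport supp_q).
- exact: psum_shifted_ge0.
- exact: shifted_crossing.
- exact: shiftediff_tail_le0_le0.
Qed.

End Candidate.

Lemma LB_Phi_cone m : LB l m -> Phi_cone l (l - e - m).
Proof.
(* here q = r and the difference is eps_{r-1} *)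
case=> r_ge2 [_ [supp_r ->]].
have q_r : q = r.
  apply/eqP; rewrite eqn_leq; case/andP: q_range => _ ->.
  by apply/negP => ?; apply: (q_max _ supp_r); lia.
apply: (Phi_cone_nonneg supp_q) => j; last by rewrite q_r leqNgt ltn_ord.
rewrite alpha_lt ?alpha_r; [|lia|lia].
by rewrite !mxE q_r; have := ler0n rat (j == r.-2 :> nat); lra.
Qed.

Lemma candidate_Phi_cone m : LB_candidate l m -> Phi_cone l (l - e - m).
Proof.
case=> [[[m_dom diff_Q] not_Pi_plus] | /LB_Phi_cone //].
by apply: Pi_plus_G_Phi_cone => // d_N; apply: not_Pi_plus.
Qed.

Lemma llb_alphaE : \sum_(q <= i < r) alpha r i + 2^-1 *: alpha r r = e.
Proof.
have r_gt0 : (0 < r)%N by lia.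
apply: eq_from_psum => -[|k] le_kr; first by rewrite !psum_nil.
rewrite psumD psum_sum psumZ psum_alpha_r // psum_eps_q.
rewrite (eq_big_nat _ _ (F2 := fun i => 1 * (i == k.+1)%:R)) => [|i i_range]; last first.
  by rewrite mul1r psum_alpha_lt //; lia.
rewrite sum_nat_indicator; have [lt_kr | le_rk] := ltnP k.+1 r.
  by rewrite (_ : (k.+1 == r) = false) ?mulr0 ?addr0 ?lt_kr ?andbT; [case: leqP | lia].
rewrite (_ : (k.+1 == r)) ?andbF ?mulr1 ?add0r ?mulVf //; last by lia.
by have -> : (q <= k.+1)%N by lia.
Qed.

Lemma llb_omegaE : l + omega r q.-1 - omega r q = l - e.
Proof.
apply/rowP => j; rewrite !mxE -addrA; congr (_ + _).
have /(congr1 (fun n => n%:R : rat)) : ((j < q.-1) + (j == q.-1 :> nat) = (j < q))%N by lia.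
by rewrite natrD => <-; ring.
Qed.

End LittleBrother.

Theorem proposition2p15 (r : nat) (l : vec r) (q : nat) :
  (1 <= r)%N ->
  dominant l -> l != 0 ->
  Supp l q -> (forall i, (q < i <= r)%N -> ~ Supp l i) ->
  let llb := l - \sum_(q <= i < r) alpha r i - 2^-1 *: alpha r r in
  llb = l + omega r q.-1 - omega r q /\
  (forall m : vec r, LB_G l m <-> m = llb).
Proof.
(* [1 <= r] and [l != 0] follow from [Supp l q]. *)
move=> _ l_dom _ supp_q q_max llb.
have llbE : llb = l - eps_at r q.-1 by rewrite /llb -addrA -opprD (llb_alphaE supp_q).
split; first by rewrite llbE (llb_omegaE supp_q).
move=> m; rewrite llbE; split.
- case=> cand_m m_max; apply/esym/m_max; first exact: candidate_llb l_dom supp_q.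
  by apply/leQE; exact: candidate_Phi_cone l_dom supp_q q_max _ cand_m.
- move=> ->; split=> [|nu cand_nu /leQE le_nu]; first exact: candidate_llb l_dom supp_q.
  apply/eqP; rewrite -subr_eq0; apply/eqP/(Phi_cone_pointed le_nu).
  by rewrite opprB; exact: candidate_Phi_cone l_dom supp_q q_max _ cand_nu.
Qed.
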